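(* Let $I$ be an ideal of a Noetherian ring $A$. Then $$I_>\subseteq\bigcap_{J\in\mathcal{MR}(I)}{}^*J.$$
   Context: $\overline{v}_I(a)=\lim_{n\to\infty}\operatorname{ord}_I(a^n)/n$ where $\operatorname{ord}_I(a)=\max\{n: a\in I^n\}$ ($\infty$ if $a\in\bigcap_nI^n$); $I_>=\{a\in A\mid\overline{v}_I(a)>1\}$. A reduction of $I$ is an ideal $J\subseteq I$ with $\overline{J}=\overline{I}$ (integral closures); $\mathcal{MR}(I)$ is the set of minimal reductions of $I$ (reductions minimal with respect to inclusion). ${}^*J$ is the weak subintegral closure of $J$: $b\in A$ lies in ${}^*J$ if there exist $q\in\mathbb{N}$ and $a_i\in J^i$ ($1\le i\le 2q+1$) with $b^n+\sum_{i=1}^n\binom{n}{i}a_ib^{n-i}=0$ for $q+1\le n\le 2q+1$. *)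

From HB Require Import structures.
From mathcomp Require Import all_boot all_order all_algebra.
From mathcomp Require Import all_classical all_reals all_analysis.
From mathcomp Require Import Rstruct Rstruct_topology.
Set Implicit Arguments. Unset Strict Implicit. Unset Printing Implicit Defensive.
Import Order.TTheory GRing.Theory Num.Theory.
Local Open Scope classical_set_scope.
Local Open Scope ring_scope.

Section IdealDefs.
Variable A : comPzRingType.

Definition is_ideal (I : set A) : Prop :=
  [/\ I 0, (forall x y, I x -> I y -> I (x + y)) & (forall r x, I x -> I (r * x))].

Definition noetherian : Prop :=
  forall C : nat -> set A, (forall n, is_ideal (C n)) ->
    (forall n, C n `<=` C n.+1) -> exists N, forall m, (N <= m)%N -> C m = C N.

Definition ideal_mul (I J : set A) : set A :=
  [set a | exists s : seq (A * A),
     (forall p, p \in s -> I p.1 /\ J p.2) /\ a = \sum_(p <- s) p.1 * p.2].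

Fixpoint ideal_pow (I : set A) (n : nat) : set A :=
  if n is m.+1 then ideal_mul (ideal_pow I m) I else [set: A].

(* ord_I(a) = max {n | a \in I^n}, +oo if a \in \bigcap_n I^n.
   Since I^0 = A and the powers decrease, this max is the supremum. *)
Definition ord (I : set A) (a : A) : \bar Rdefinitions.R :=
  ereal_sup [set (n%:R)%:E | n in [set n : nat | ideal_pow I n a]].

Definition vbar (I : set A) (a : A) : \bar Rdefinitions.R :=
  limn (fun n : nat => (ord I (a ^+ n) * (n%:R^-1)%:E)%E).

Definition I_gt (I : set A) : set A := [set a | (1%:E < vbar I a)%E].

Definition int_closure (I : set A) : set A :=
  [set b | exists (n : nat) (c : nat -> A), (0 < n)%N /\
     (forall i, (1 <= i <= n)%N -> ideal_pow I i (c i)) /\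
     b ^+ n + \sum_(1 <= i < n.+1) c i * b ^+ (n - i) = 0].

Definition reduction (J I : set A) : Prop :=
  is_ideal J /\ J `<=` I /\ int_closure J = int_closure I.

Definition minimal_reduction (J I : set A) : Prop :=
  reduction J I /\ (forall K, reduction K I -> K `<=` J -> K = J).

Definition weak_subint_closure (J : set A) : set A :=
  [set b | exists (q : nat) (c : nat -> A),
     (forall i, (1 <= i <= 2 * q + 1)%N -> ideal_pow J i (c i)) /\
     (forall n, (q + 1 <= n <= 2 * q + 1)%N ->
        b ^+ n + \sum_(1 <= i < n.+1) ('C(n, i)%:R * c i * b ^+ (n - i)) = 0)].

End IdealDefs.

From HB Require Import structures.
From mathcomp Require Import all_boot all_order all_algebra.
From mathcomp Require Import all_classical all_reals all_analysis.
From mathcomp Require Import Rstruct.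
From mathcomp Require Import lra zify.
Set Implicit Arguments.
Unset Strict Implicit.
Unset Printing Implicit Defensive.
Import Order.TTheory GRing.Theory Num.Theory.
Local Open Scope classical_set_scope.
Local Open Scope ring_scope.

(* Since [A] is Noetherian, [I] is finitely generated; each generator [g] is
   integral over [J], which gives [g^(n+1) \in I^n J], and expanding
   [(g_1, ..., g_s)^N] shows [I^(m+1) ⊆ I^m J] for some [m], hence
   [I^(m+t) ⊆ J^t]. If [vbar_I(b) > c > 1] then [b^n \in I^k] with
   [k > c n >= m + n] for all large [n], so [b^n \in J^n] for all [n > q].
   Integers [e_i] with [e_i = 0] for [1 <= i <= q] and
   [sum_(i=0)^n C(n,i) e_i = 0] for [n > q] (where [e_0 = 1]) then make
   [c_i := e_i b^i \in J^i] a witness of [b \in *J]. *)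

Section Ideals.
Variable A : comPzRingType.
Implicit Types (X Y Z T : set A) (x y r g : A).

Section IdealClosure.
Variable T : set A.
Hypothesis idT : is_ideal T.

Lemma ideal0 : T 0. Proof. by case: idT. Qed.
Lemma idealD x y : T x -> T y -> T (x + y). Proof. by case: idT => _ + _; apply. Qed.
Lemma idealMl r x : T x -> T (r * x). Proof. by case: idT => _ _; apply. Qed.
Lemma idealMr r x : T x -> T (x * r). Proof. by rewrite mulrC; apply: idealMl. Qed.
Lemma idealN x : T x -> T (- x). Proof. by rewrite -mulN1r; apply: idealMl. Qed.

Lemma ideal_sum (I : eqType) (s : seq I) (F : I -> A) :
  (forall i, i \in s -> T (F i)) -> T (\sum_(i <- s) F i).
Proof.
elim: s => [|i s IH] hs; first by rewrite big_nil; apply: ideal0.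
rewrite big_cons; apply: idealD; first by apply: hs; rewrite mem_head.
by apply: IH => j hj; apply: hs; rewrite inE hj orbT.
Qed.

Lemma ideal_colon z : is_ideal [set x | T (x * z)].
Proof.
split => /= [|x y hx hy|s x hx]; first by rewrite mul0r; apply: ideal0.
  by rewrite mulrDl; apply: idealD.
by rewrite -mulrA; apply: idealMl.
Qed.

End IdealClosure.

Lemma ideal_set0 : is_ideal [set 0 : A].
Proof. by split => //= [x y -> ->|r x ->]; rewrite ?addr0 ?mulr0. Qed.

Lemma mem_ideal_mul X Y x y : X x -> Y y -> ideal_mul X Y (x * y).
Proof.
move=> hx hy; exists [:: (x, y)]; split; last by rewrite big_seq1.
by move=> p; rewrite inE => /eqP ->.
Qed.

Lemma ideal_mul_min X Y T : is_ideal T ->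
  (forall x y, X x -> Y y -> T (x * y)) -> ideal_mul X Y `<=` T.
Proof. by move=> hT h _ [s [hs ->]]; apply: ideal_sum => // p /hs[]; apply: h. Qed.

Lemma ideal_mul_ideal X Y : is_ideal X -> is_ideal (ideal_mul X Y).
Proof.
move=> hX; split.
- by exists [::]; rewrite big_nil.
- move=> _ _ [s [hs ->]] [t [ht ->]]; exists (s ++ t); rewrite big_cat.
  by split => // p; rewrite mem_cat => /orP[/hs|/ht].
- move=> r _ [s [hs ->]]; exists [seq (r * p.1, p.2) | p <- s]; split.
    by move=> _ /mapP[p /hs[h1 h2] ->]; split => //; apply: idealMl.
  by rewrite big_map mulr_sumr; apply: eq_bigr => p _; rewrite mulrA.
Qed.

Lemma ideal_mulS X Y X' Y' : is_ideal X' ->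
  X `<=` X' -> Y `<=` Y' -> ideal_mul X Y `<=` ideal_mul X' Y'.
Proof.
move=> hX' sX sY; apply: ideal_mul_min; first exact: ideal_mul_ideal.
by move=> x y /sX hx /sY hy; apply: mem_ideal_mul.
Qed.

Lemma ideal_mulC X Y : is_ideal X -> is_ideal Y -> ideal_mul X Y = ideal_mul Y X.
Proof.
have sub (U V : set A) : is_ideal V -> ideal_mul U V `<=` ideal_mul V U.
  move=> hV; apply: ideal_mul_min; first exact: ideal_mul_ideal.
  by move=> x y hx hy; rewrite mulrC; apply: mem_ideal_mul.
by move=> hX hY; apply/seteqP; split; apply: sub.
Qed.

Lemma ideal_mulA_sub X Y Z : is_ideal X -> is_ideal Y ->
  ideal_mul (ideal_mul X Y) Z `<=` ideal_mul X (ideal_mul Y Z).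
Proof.
move=> hX hY; apply: ideal_mul_min; first exact: ideal_mul_ideal.
move=> w z hw hz; move: w hw; apply: ideal_mul_min.
  by apply: ideal_colon; apply: ideal_mul_ideal.
by move=> x y hx hy /=; rewrite -mulrA; apply: mem_ideal_mul => //; apply: mem_ideal_mul.
Qed.

Lemma ideal_mulA X Y Z : is_ideal X -> is_ideal Y -> is_ideal Z ->
  ideal_mul X (ideal_mul Y Z) = ideal_mul (ideal_mul X Y) Z.
Proof.
move=> hX hY hZ; apply/seteqP; split; last exact: ideal_mulA_sub.
have hYZ := ideal_mul_ideal Z hY; have hZY := ideal_mul_ideal Y hZ.
have hXY := ideal_mul_ideal Y hX.
rewrite (ideal_mulC hX hYZ) (ideal_mulC hY hZ).
rewrite [X in _ `<=` X](ideal_mulC hXY hZ) (ideal_mulC hX hY).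
exact: ideal_mulA_sub.
Qed.

Lemma ideal_mulAC X Y Z : is_ideal X -> is_ideal Y -> is_ideal Z ->
  ideal_mul (ideal_mul X Y) Z = ideal_mul (ideal_mul X Z) Y.
Proof.
by move=> hX hY hZ; rewrite -!ideal_mulA // (ideal_mulC hY hZ).
Qed.

Lemma ideal_mulT X : is_ideal X -> ideal_mul X [set: A] = X.
Proof.
move=> hX; apply/seteqP; split.
  by apply: ideal_mul_min => // x y hx _; apply: idealMr.
by move=> x hx; rewrite -[x]mulr1; apply: mem_ideal_mul.
Qed.

Lemma ideal_mulTl X : is_ideal X -> ideal_mul [set: A] X = X.
Proof. by move=> hX; rewrite ideal_mulC ?ideal_mulT. Qed.

Lemma ideal_pow_ideal X n : is_ideal X -> is_ideal (ideal_pow X n).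
Proof. by move=> hX; elim: n => [|n IH] //=; apply: ideal_mul_ideal. Qed.

Lemma ideal_pow1 X : is_ideal X -> ideal_pow X 1 = X.
Proof. exact: ideal_mulTl. Qed.

Lemma ideal_powD X m n : is_ideal X ->
  ideal_pow X (m + n) = ideal_mul (ideal_pow X m) (ideal_pow X n).
Proof.
move=> hX; have hP k : is_ideal (ideal_pow X k) by apply: ideal_pow_ideal.
elim: n => [|n IH]; first by rewrite addn0 ideal_mulT.
by rewrite addnS /= IH ideal_mulA.
Qed.

Lemma ideal_powS X Y n : is_ideal Y -> X `<=` Y -> ideal_pow X n `<=` ideal_pow Y n.
Proof.
move=> hY sXY; elim: n => [|n IH] //=.
by apply: ideal_mulS => //; apply: ideal_pow_ideal.
Qed.

Lemma ideal_pow_decr X m n : is_ideal X -> (m <= n)%N ->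
  ideal_pow X n `<=` ideal_pow X m.
Proof.
move=> hX /subnKC <-; rewrite ideal_powD //.
apply: ideal_mul_min => [|x y hx _]; first exact: ideal_pow_ideal.
exact: idealMr (ideal_pow_ideal m hX) _ _ hx.
Qed.

Lemma mem_ideal_pow X g n : X g -> ideal_pow X n (g ^+ n).
Proof. by move=> hg; elim: n => [|n IH] //=; rewrite exprSr; apply: mem_ideal_mul. Qed.

Definition principal g : set A := [set r * g | r in [set: A]].

Lemma principal_ideal g : is_ideal (principal g).
Proof.
split; first by exists 0; rewrite ?mul0r.
  by move=> _ _ [r _ <-] [s _ <-]; exists (r + s); rewrite ?mulrDl.
by move=> r _ [s _ <-]; exists (r * s); rewrite ?mulrA.
Qed.

Lemma mem_principal g : principal g g.
Proof. by exists 1; rewrite ?mul1r. Qed.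

Lemma principal_min T g : is_ideal T -> T g -> principal g `<=` T.
Proof. by move=> hT hg _ [r _ <-]; apply: idealMl. Qed.

Lemma principal_pow g n : ideal_pow (principal g) n `<=` principal (g ^+ n).
Proof.
elim: n => [|n IH] /=; first by move=> x _; exists x; rewrite ?expr0 ?mulr1.
apply: ideal_mul_min; first exact: principal_ideal.
move=> _ _ /IH[r _ <-] [s _ <-]; exists (r * s) => //.
by rewrite exprSr mulrACA.
Qed.

Definition ideal_add X Y : set A := [set k + l | k in X & l in Y].

Lemma ideal_add_ideal X Y : is_ideal X -> is_ideal Y -> is_ideal (ideal_add X Y).
Proof.
move=> hX hY; split.
- by exists 0; [apply: ideal0 | exists 0; rewrite ?addr0 //; apply: ideal0].
- move=> _ _ [k hk [l hl <-]] [k' hk' [l' hl' <-]].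
  exists (k + k'); first exact: idealD.
  by exists (l + l'); [apply: idealD | rewrite addrACA].
- move=> r _ [k hk [l hl <-]]; exists (r * k); first exact: idealMl.
  by exists (r * l); [apply: idealMl | rewrite mulrDr].
Qed.

Lemma ideal_add_min X Y T : is_ideal T -> X `<=` T -> Y `<=` T -> ideal_add X Y `<=` T.
Proof. by move=> hT sX sY _ [k /sX hk [l /sY hl <-]]; apply: idealD. Qed.

Fixpoint ideal_gen (s : seq A) : set A :=
  if s is g :: s' then ideal_add (principal g) (ideal_gen s') else [set 0].

Lemma ideal_gen_ideal s : is_ideal (ideal_gen s).
Proof.
elim: s => [|g s IH] /=; first exact: ideal_set0.
by apply: ideal_add_ideal => //; apply: principal_ideal.
Qed.

Lemma mem_ideal_gen s x : x \in s -> ideal_gen s x.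
Proof.
elim: s => [|g s IH] //=; rewrite inE => /orP[/eqP->|/IH hx].
  by exists g; [apply: mem_principal | exists 0; rewrite ?addr0 //; apply: ideal0 (ideal_gen_ideal s)].
by exists 0; [apply: ideal0 (principal_ideal g) | exists x; rewrite ?add0r].
Qed.

Lemma ideal_gen_min s T : is_ideal T -> (forall x, x \in s -> T x) -> ideal_gen s `<=` T.
Proof.
move=> hT; elim: s => [|g s IH] hs /=; first by move=> _ ->; apply: ideal0.
apply: ideal_add_min => //; first by apply: principal_min => //; apply: hs; rewrite mem_head.
by apply: IH => x hx; apply: hs; rewrite inE hx orbT.
Qed.

(* Induction on [N] for all [T] at once: a factor [k] of [X] or [Y] is moved
   into the colon ideal [(T : k)]. *)
Lemma ideal_add_pow_min X Y T N : is_ideal T ->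
  (forall a b, (a + b = N)%N -> ideal_mul (ideal_pow X a) (ideal_pow Y b) `<=` T) ->
  ideal_pow (ideal_add X Y) N `<=` T.
Proof.
elim: N T => [|N IH] T hT hN /=.
  move=> x _; rewrite -[x]mulr1 -[1]mulr1; apply: (idealMl hT).
  by apply: (hN 0 0)%N => //; apply: mem_ideal_mul.
apply: ideal_mul_min => // x _ hx [k hk [l hl <-]]; rewrite mulrDr.
apply: (idealD hT).
- apply: (IH [set u | T (u * k)] (ideal_colon hT k)) hx => a b hab.
  apply: ideal_mul_min (ideal_colon hT k) _ => p q hp hq /=.
  rewrite mulrAC; apply: (hN a.+1 b); first by rewrite addSn hab.
  by apply: mem_ideal_mul => //; apply: mem_ideal_mul.
- apply: (IH [set u | T (u * l)] (ideal_colon hT l)) hx => a b hab.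
  apply: ideal_mul_min (ideal_colon hT l) _ => p q hp hq /=.
  rewrite -mulrA; apply: (hN a b.+1); first by rewrite addnS hab.
  by apply: mem_ideal_mul => //; apply: mem_ideal_mul.
Qed.

Local Hint Resolve ideal_mul_ideal ideal_pow_ideal principal_ideal ideal_gen_ideal : core.

Lemma subset_int_closure X : is_ideal X -> X `<=` int_closure X.
Proof.
move=> hX g hg; exists 1%N, (fun _ => - g); split => //; split.
  move=> i /andP[i1 i1']; have -> : i = 1%N by apply/eqP; rewrite eqn_leq i1 i1'.
  by rewrite ideal_pow1 //; apply: idealN.
by rewrite big_nat1 subnn expr0 mulr1 expr1 addrN.
Qed.

Section Reduction.
Variables I J : set A.
Hypotheses (hI : is_ideal I) (hJ : is_ideal J) (sJI : J `<=` I).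

(* [pow_absorbed I J I n] says that the reduction number of [I] with respect
   to [J] is at most [n]. *)
Definition pow_absorbed X n := ideal_pow X n.+1 `<=` ideal_mul (ideal_pow I n) J.

Lemma ideal_pow_mulJ i k :
  ideal_mul (ideal_pow I (i + k)) J = ideal_mul (ideal_mul (ideal_pow I i) J) (ideal_pow I k).
Proof. by rewrite ideal_powD // ideal_mulAC; auto. Qed.

Lemma ideal_pow_mul_absorbed i k :
  ideal_mul (ideal_pow J i.+1) (ideal_pow I k) `<=` ideal_mul (ideal_pow I (i + k)) J.
Proof.
rewrite ideal_pow_mulJ /=.
by apply: ideal_mulS; [auto | apply: ideal_mulS; [auto | exact: ideal_powS |] |].
Qed.

Lemma int_closure_pow_absorbed g : I g -> int_closure J g ->
  exists n, pow_absorbed (principal g) n.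
Proof.
move=> hg [n [c [n0 [hc]]]]; move/eqP; rewrite addr_eq0 => /eqP eq_gn.
exists n.-1; rewrite /pow_absorbed prednK //.
move=> x /principal_pow; apply: principal_min; auto.
rewrite eq_gn; apply: idealN; auto.
apply: ideal_sum; auto.
move=> [|i]; rewrite mem_index_iota // => /andP[_ lt_in].
have -> : n.-1 = (i + (n - i.+1))%N by lia.
apply: ideal_pow_mul_absorbed; apply: mem_ideal_mul; last exact: mem_ideal_pow.
by apply: hc; lia.
Qed.

Lemma pow_absorbed_mul X Y n d b : is_ideal X -> is_ideal Y -> X `<=` I -> Y `<=` I ->
  pow_absorbed X n ->
  ideal_mul (ideal_pow X (n.+1 + d)) (ideal_pow Y b) `<=` ideal_mul (ideal_pow I (n + d + b)) J.
Proof.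
move=> hX hY sXI sYI hn; rewrite (ideal_powD _ _ hX) !ideal_pow_mulJ.
by apply: ideal_mulS; [auto | apply: ideal_mulS; [auto | | exact: ideal_powS] | exact: ideal_powS].
Qed.

Lemma pow_absorbed_add X Y n m : is_ideal X -> is_ideal Y -> X `<=` I -> Y `<=` I ->
  pow_absorbed X n -> pow_absorbed Y m -> pow_absorbed (ideal_add X Y) (n + m).
Proof.
move=> hX hY sXI sYI hn hm; apply: ideal_add_pow_min; first by auto.
move=> a b hab; case: (ltnP n a) => [lt_na|le_an].
  have -> : a = (n.+1 + (a - n.+1))%N by lia.
  have -> : (n + m)%N = (n + (a - n.+1) + b)%N by lia.
  exact: pow_absorbed_mul.
have -> : b = (m.+1 + (b - m.+1))%N by lia.
have -> : (n + m)%N = (m + (b - m.+1) + a)%N by lia.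
rewrite ideal_mulC; auto.
exact: pow_absorbed_mul.
Qed.

Lemma pow_absorbed_gen s :
  (forall g, g \in s -> I g /\ exists n, pow_absorbed (principal g) n) ->
  exists m, pow_absorbed (ideal_gen s) m.
Proof.
elim: s => [|g s IH] hs.
  by exists 0%N; rewrite /pow_absorbed ideal_pow1 // => _ ->; apply: ideal0; auto.
have [m hm] : exists m, pow_absorbed (ideal_gen s) m.
  by apply: IH => x hx; apply: hs; rewrite inE hx orbT.
have [Ig [n hn]] := hs g (mem_head g s).
exists (n + m)%N; apply: pow_absorbed_add => //; first exact: principal_min.
by apply: ideal_gen_min => // x hx; apply: (hs x _).1; rewrite inE hx orbT.
Qed.

Lemma pow_absorbed_pow m t : pow_absorbed I m -> ideal_pow I (m + t) `<=` ideal_pow J t.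
Proof.
move=> hm; elim: t => [|t IH]; first by [].
rewrite addnS -addSn ideal_powD // /=.
apply: subset_trans (ideal_mulS _ hm (@subset_refl _ _)) _; auto.
by rewrite -ideal_pow_mulJ; apply: ideal_mulS => //; auto.
Qed.

End Reduction.

Lemma noetherian_ideal_gen (I : set A) : noetherian A -> is_ideal I -> exists s, I = ideal_gen s.
Proof.
move=> hN hI; apply: contrapT => no_gen.
have next s : exists x, (forall y, y \in s -> I y) -> I x /\ ~ ideal_gen s x.
  have [sI|] := pselect (forall y, y \in s -> I y); last by exists 0.
  have : ~ (I `<=` ideal_gen s).
    by move=> sub; apply: no_gen; exists s; apply/seteqP; split => //; apply: ideal_gen_min.
  by move=> /existsNP[x /not_implyP hx]; exists x.
have [f hf] := choice next.
pose chain := fix chain n := if n is k.+1 then f (chain k) :: chain k else [::].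
have chainI n y : y \in chain n -> I y.
  elim: n y => [|n IH] y //=; rewrite inE => /orP[/eqP ->|]; last exact: IH.
  exact: (hf _ (IH)).1.
have chain_mono n : ideal_gen (chain n) `<=` ideal_gen (chain n.+1).
  by apply: ideal_gen_min => // x hx; apply: mem_ideal_gen; rewrite inE hx orbT.
have [N stable] := hN _ (fun n => ideal_gen_ideal (chain n)) chain_mono.
apply: (hf _ (chainI N)).2; rewrite -(stable N.+1) //.
by apply: mem_ideal_gen; rewrite mem_head.
Qed.

Lemma reduction_pow_absorbed (I J : set A) : noetherian A -> is_ideal I -> reduction J I ->
  exists m, pow_absorbed I J I m.
Proof.
move=> hN hI [hJ [sJI eq_cl]]; have [s eIs] := noetherian_ideal_gen hN hI.
have [m hm] : exists m, pow_absorbed I J (ideal_gen s) m.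
  apply: pow_absorbed_gen => // g gs; have Ig : I g by rewrite eIs; apply: mem_ideal_gen.
  split => //; apply: int_closure_pow_absorbed => //.
  by rewrite eq_cl; apply: subset_int_closure.
by exists m; rewrite /pow_absorbed {1}eIs.
Qed.

End Ideals.

Section WeakSubintegralCoefficients.
Variable q : nat.

(* [wsi_coef i] is [e_i] for [i >= 1]; [e_0 = 1] appears as the constant [1].
   [wsi_table n] lists the first [n] coefficients, which makes the strong
   recursion structural. *)
Fixpoint wsi_table (n : nat) : nat -> int :=
  if n is m.+1 then fun j =>
    if j == m then
      if (m <= q)%N then 0 else - (1 + \sum_(1 <= i < m) 'C(m, i)%:Z * wsi_table m i)
    else wsi_table m j
  else fun=> 0.

Definition wsi_coef (i : nat) : int := wsi_table i.+1 i.

Lemma wsi_tableE n j : (j < n)%N -> wsi_table n j = wsi_coef j.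
Proof.
elim: n => // n IH; rewrite ltnS leq_eqVlt => /orP[/eqP-> //|lt_jn] /=.
by rewrite ltn_eqF // IH.
Qed.

Lemma wsi_coefE i : wsi_coef i =
  if (i <= q)%N then 0 else - (1 + \sum_(1 <= j < i) 'C(i, j)%:Z * wsi_coef j).
Proof.
rewrite /wsi_coef /= eqxx; case: ifP => // _; congr (- (1 + _)).
by apply: eq_big_nat => j /andP[_ lt_ji]; rewrite wsi_tableE.
Qed.

Lemma wsi_coef_small i : (i <= q)%N -> wsi_coef i = 0.
Proof. by rewrite wsi_coefE => ->. Qed.

Lemma wsi_coef_binom n : (q < n)%N -> 1 + \sum_(1 <= i < n.+1) 'C(n, i)%:Z * wsi_coef i = 0.
Proof.
move=> lt_qn; rewrite big_nat_recr /=; last by lia.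
by rewrite binn mul1r [wsi_coef n]wsi_coefE leqNgt lt_qn /= addrA subrr.
Qed.

End WeakSubintegralCoefficients.

Lemma weak_subint_closure_of_pow (A : comPzRingType) (J : set A) b q : is_ideal J ->
  (forall n, (q < n)%N -> ideal_pow J n (b ^+ n)) -> weak_subint_closure J b.
Proof.
move=> hJ hb; exists q, (fun i => (wsi_coef q i)%:~R * b ^+ i); split.
  move=> i _ /=; case: (leqP i q) => [le_iq|lt_qi].
    by rewrite wsi_coef_small // mul0r; apply: ideal0; apply: ideal_pow_ideal.
  by apply: idealMl; [apply: ideal_pow_ideal | apply: hb].
move=> n /andP[lt_qn _].
have -> : \sum_(1 <= i < n.+1) ('C(n, i)%:R * ((wsi_coef q i)%:~R * b ^+ i) * b ^+ (n - i))
    = (\sum_(1 <= i < n.+1) 'C(n, i)%:Z * wsi_coef q i)%:~R * b ^+ n.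
  rewrite mulrz_sumr mulr_suml; apply: eq_big_nat => i /andP[_ le_in].
  by rewrite intrM -pmulrn mulrA -mulrA -exprD subnKC.
by rewrite -[X in X + _]mul1r -mulrDl -[1]/(1%:~R) -intrD wsi_coef_binom ?mul0r //; lia.
Qed.

(* [0 <= a] is needed because [limn u] is the junk value [0] when [u] diverges. *)
Lemma limn_gt_near (R : realType) (u : nat -> \bar R) (a : R) : 0 <= a ->
  (a%:E < limn u)%E -> exists2 c, a < c & \forall n \near \oo, (c%:E < u n)%E.
Proof.
move=> a_ge0; have [[l ul]|no_lim] := pselect (exists l : \bar R, u @ \oo --> l); last first.
  by rewrite /lim /lim_in getPN => [|l ul]; [rewrite lte_fin ltNge a_ge0 | apply: no_lim; exists l].
rewrite (cvg_lim _ ul) //; case: l ul => [r| |] // ul.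
  rewrite lte_fin => a_lt_r; exists ((a + r) / 2); first lra.
  have mid_lt_r : (a + r) / 2 < r by lra.
  exact: ul _ (@nbhs_open_ereal_gt _ r (fun=> (a + r) / 2) mid_lt_r).
by exists (a + 1); [lra | apply: cvgey_gt].
Qed.

Lemma ord_div_gt (A : comPzRingType) (I : set A) a (n : nat) (c : Rdefinitions.R) :
  (0 < n)%N -> (c%:E < ord I a * (n%:R^-1)%:E)%E ->
  exists2 k, ideal_pow I k a & c * n%:R < k%:R.
Proof.
move=> n_gt0 lt_c_ord; have n_pos : 0 < (n%:R : Rdefinitions.R) by rewrite ltr0n.
have : ((c * n%:R)%:E < ord I a)%E.
  move: lt_c_ord; case: (ord I a) => [r| |] //=.
  - by rewrite !lte_fin -ltr_pdivlMr.
  - by move=> _; apply: ltry.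
  - by rewrite gt0_mulNye ?lte_fin ?invr_gt0.
by move=> /ereal_sup_gt[_ [k Ik <-]]; rewrite lte_fin; exists k.
Qed.

Lemma I_gt_pow_near (A : comPzRingType) (I : set A) b m : is_ideal I -> I_gt I b ->
  exists q, forall n, (q < n)%N -> ideal_pow I (m + n) (b ^+ n).
Proof.
move=> hI /limn_gt_near[//|c c_gt1 ev_c].
have [q _ hq] : \forall n \near \oo,
    [/\ (0 < n)%N, (c%:E < ord I (b ^+ n) * (n%:R^-1)%:E)%E & m%:R / (c - 1) <= n%:R].
  by near=> n; split; near: n; [exact: nbhs_infty_gt | exact: ev_c | exact: nbhs_infty_ger].
exists q => n /ltnW /hq[n_gt0 /(ord_div_gt n_gt0)[k Ik lt_cn_k] le_m_n].
apply: ideal_pow_decr Ik => //; rewrite -(ler_nat Rdefinitions.R) natrD.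
suff : (m%:R : Rdefinitions.R) <= (c - 1) * n%:R by lra.
by move: le_m_n; rewrite ler_pdivrMr ?subr_gt0 // mulrC.
Unshelve. all: by end_near.
Qed.

Theorem corollary4p5 (A : comPzRingType) (I : set A) :
  noetherian A -> is_ideal I ->
  I_gt I `<=` \bigcap_(J in [set J : set A | minimal_reduction J I])
                 weak_subint_closure J.
Proof.
move=> noethA hI b hb J [redJ _]; have [hJ _] := redJ.
have [m absorbed_m] := reduction_pow_absorbed noethA hI redJ.
have [q hq] := I_gt_pow_near m hI hb.
apply: (weak_subint_closure_of_pow (q := q) hJ) => n lt_qn.
by apply: (pow_absorbed_pow hI hJ absorbed_m); apply: hq.
Qed.
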